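(* Let $\mathcal{X}=\mathbb{R}_{>0}^3$, $\mathcal{Y}=\mathbb{R}_{>0}$, $\mathcal{U}=\mathbb{R}_{>0}$, and consider $x^+=f(x,u)$, $y=h(x)$ with $f(x,u)=\big(x_1x_2x_3,\ x_3/x_1,\ \sqrt{x_1x_2u}\big)^T$ and $h(x)=x_1$. Then (i) for every $x\in\mathcal{X}$, $[x]_2=\{x\}$; and (ii) the system $$\hat x^+=\big(\hat x_2\hat x_3 y,\ \hat x_3/\hat x_1,\ \sqrt{\hat x_1\hat x_2 u}\big)^T$$ is a deadbeat observer for this system.
   Context: $h^{-1}(y):=\{\eta\in\mathcal{X}:h(\eta)=y\}$; $f(S,u):=\{f(s,u):s\in S\}$; $[S]_k:=\bigcup_{s\in S}[s]_k$. Define $[x]_0:=h^{-1}(h(x))$, and for $k\ge0$: $[x]_k^+:=\bigcup_{(\eta,u)\in\mathcal{X}\times\mathcal{U}:f(\eta,u)=x} f([\eta]_k,u)$, $[x]_{k+1}:=[x]_k^+\cap[x]_0$. For an input sequence $\mathbf{u}=(u_0,u_1,\ldots)$, $\phi(0,x,\mathbf{u})=x$, $\phi(k+1,x,\mathbf{u})=f(\phi(k,x,\mathbf{u}),u_k)$. For an observer $\hat x^+=g(\hat x,y,u)$, the coupled solution is $\psi(0,\hat x,x,\mathbf{u})=\hat x$, $\psi(k+1,\hat x,x,\mathbf{u})=g(\psi(k,\hat x,x,\mathbf{u}),h(\phi(k,x,\mathbf{u})),u_k)$; it is a deadbeat observer if there is $p\ge1$ with $\psi(k,\hat x,x,\mathbf{u})=\phi(k,x,\mathbf{u})$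 for all $x,\hat x\in\mathcal{X}$, all input sequences $\mathbf{u}$ with values in $\mathcal{U}$, and all $k\ge p$. *)

From Stdlib Require Import Reals.
Open Scope R_scope.

(* Generic notions for a system x+ = f(x,u), y = h(x), where the state space
   X is a subset (predicate Xs) of a carrier type T, and the input space U is
   a subset (predicate Us) of a carrier type V. *)

Definition preimg {T Y : Type} (Xs : T -> Prop) (h : T -> Y) (y : Y) : T -> Prop :=
  fun eta => Xs eta /\ h eta = y.

(* [x]_k.  [x]_0 = h^{-1}(h x);
   [x]_{k+1} = [x]_k^+ /\ [x]_0, where
   [x]_k^+ = U_{(eta,u) in X x U, f(eta,u) = x} f([eta]_k, u). *)
Fixpoint cls {T V Y : Type} (Xs : T -> Prop) (Us : V -> Prop)
  (f : T -> V -> T) (h : T -> Y) (k : nat) (x : T) : T -> Prop :=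
  match k with
  | O => preimg Xs h (h x)
  | S k' => fun z =>
      (exists (eta : T) (u : V), Xs eta /\ Us u /\ f eta u = x /\
          exists s, cls Xs Us f h k' eta s /\ z = f s u)
      /\ preimg Xs h (h x) z
  end.

Fixpoint phi {T V : Type} (f : T -> V -> T) (k : nat) (x : T) (u : nat -> V) : T :=
  match k with
  | O => x
  | S k' => f (phi f k' x u) (u k')
  end.

Fixpoint psi {T V Y : Type} (f : T -> V -> T) (h : T -> Y) (g : T -> Y -> V -> T)
  (k : nat) (xh x : T) (u : nat -> V) : T :=
  match k with
  | O => xh
  | S k' => g (psi f h g k' xh x u) (h (phi f k' x u)) (u k')
  end.

Definition deadbeat_observer {T V Y : Type} (Xs : T -> Prop) (Us : V -> Prop)
  (f : T -> V -> T) (h : T -> Y) (g : T -> Y -> V -> T) : Prop :=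
  exists p : nat, (1 <= p)%nat /\
    forall (x xh : T) (u : nat -> V),
      Xs x -> Xs xh -> (forall k, Us (u k)) ->
      forall k : nat, (p <= k)%nat -> psi f h g k xh x u = phi f k x u.

Definition Xpos (x : R * R * R) : Prop :=
  let '(x1, x2, x3) := x in 0 < x1 /\ 0 < x2 /\ 0 < x3.
Definition Upos (u : R) : Prop := 0 < u.

Definition fex (x : R * R * R) (u : R) : R * R * R :=
  let '(x1, x2, x3) := x in (x1 * x2 * x3, x3 / x1, sqrt (x1 * x2 * u)).

Definition hex (x : R * R * R) : R := let '(x1, _, _) := x in x1.

Definition gex (xh : R * R * R) (y : R) (u : R) : R * R * R :=
  let '(xh1, xh2, xh3) := xh in (xh2 * xh3 * y, xh3 / xh1, sqrt (xh1 * xh2 * u)).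

(* (i) If z lies in [x]_1 then z1 = x1 and z2 z3^2 = x2 x3^2: writing x = f(eta,u), z = f(r,u)
   with r1 = eta1, equal outputs give r2 r3 = eta2 eta3, and x2 x3^2 = eta2 eta3 u.  For
   z = f(s,u) in [x]_2 with s in [eta]_1, this yields s1 = eta1, s2 s3^2 = eta2 eta3^2 and,
   from z1 = x1, s2 s3 = eta2 eta3; hence s = eta and z = x.  Conversely f maps X x U onto X,
   so x lies in all its own classes.
   (ii) Feeding the observer the true output, the componentwise ratio e = xhat / x evolves
   autonomously by E(e) = (e2 e3, e3/e1, sqrt(e1 e2)).  In logarithmic coordinates E is
   linear with a nilpotent matrix, so E^3 sends every positive e to (1,1,1), which E fixes. *)
From Stdlib Require Import Reals Lra Lia.
Open Scope R_scope.

Lemma cls_refl {T V Y : Type} (Xs : T -> Prop) (Us : V -> Prop) (f : T -> V -> T) (h : T -> Y) :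
  (forall x, Xs x -> exists eta u, Xs eta /\ Us u /\ f eta u = x) ->
  forall k x, Xs x -> cls Xs Us f h k x x.
Proof.
  intros onto k; induction k as [|k IH]; intros x Hx; simpl.
  - split; auto.
  - split; [|split; auto].
    destruct (onto x Hx) as [eta [u [Heta [Hu Hf]]]].
    exists eta, u; repeat split; auto.
    exists eta; split; [apply IH; exact Heta | symmetry; exact Hf].
Qed.

Lemma fex_onto (x : R * R * R) :
  Xpos x -> exists eta u, Xpos eta /\ Upos u /\ fex eta u = x.
Proof.
  destruct x as [[x1 x2] x3]; intros [H1 [H2 H3]].
  exists (1, x1 / x2, x2), (x3 * x3 * x2 / x1); unfold Xpos, Upos; simpl.
  repeat split; try lra; try (apply Rdiv_lt_0_compat; auto; apply Rmult_lt_0_compat; nra).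
  f_equal; [f_equal; field; lra|].
  replace (1 * (x1 / x2) * (x3 * x3 * x2 / x1)) with (x3 * x3) by (field; lra).
  apply sqrt_square; lra.
Qed.

Lemma cls1_fex (e1 e2 e3 s1 s2 s3 : R) :
  cls Xpos Upos fex hex 1 (e1, e2, e3) (s1, s2, s3) ->
  s1 = e1 /\ s2 * s3 ^ 2 = e2 * e3 ^ 2.
Proof.
  intros [[[[a b] c] [u [[Ha [Hb Hc]] [Hu [Hf [[[r1 r2] r3] [[[_ [Hr2 Hr3]] Hr1] Hs]]]]]]] [_ Hh]].
  unfold Upos in Hu; simpl in Hf, Hs, Hh, Hr1; subst r1.
  injection Hf as <- <- <-; injection Hs as -> -> ->.
  split; [exact Hh|].
  rewrite !pow2_sqrt by (apply Rlt_le; repeat apply Rmult_lt_0_compat; auto).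
  assert (Hbc : r2 * r3 = b * c) by (apply Rmult_eq_reg_l with a; lra).
  replace (r3 / a * (a * r2 * u)) with (r2 * r3 * u) by (field; lra).
  rewrite Hbc; field; lra.
Qed.

Lemma cls2_fex (x z : R * R * R) : cls Xpos Upos fex hex 2 x z -> z = x.
Proof.
  intros [[[[e1 e2] e3] [u [[He1 [He2 He3]] [_ [Hf [[[s1 s2] s3] [Hs ->]]]]]]] [_ Hh]].
  pose proof (cls1_fex _ _ _ _ _ _ Hs) as [-> Hsq].
  destruct Hs as [_ [[_ [Hs2 Hs3]] _]].
  subst x; simpl in Hh.
  assert (H23 : s2 * s3 = e2 * e3) by (apply Rmult_eq_reg_l with e1; lra).
  assert (E3 : s3 = e3).
  { apply Rmult_eq_reg_l with (e2 * e3); [|nra].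
    transitivity (s2 * s3 ^ 2); [rewrite <- H23; ring | rewrite Hsq; ring]. }
  subst s3.
  assert (E2 : s2 = e2) by (apply Rmult_eq_reg_r with e3; lra).
  subst s2; reflexivity.
Qed.

Definition mul3 (x e : R * R * R) : R * R * R :=
  let '(x1, x2, x3) := x in let '(e1, e2, e3) := e in (x1 * e1, x2 * e2, x3 * e3).

Definition err_step (e : R * R * R) : R * R * R :=
  let '(e1, e2, e3) := e in (e2 * e3, e3 / e1, sqrt (e1 * e2)).

Lemma Xpos_fex (x : R * R * R) (u : R) : Xpos x -> Upos u -> Xpos (fex x u).
Proof.
  destruct x as [[x1 x2] x3]; intros [H1 [H2 H3]] Hu; unfold Upos in Hu; simpl.
  repeat split; [repeat apply Rmult_lt_0_compat | apply Rdiv_lt_0_compat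
                | apply sqrt_lt_R0; repeat apply Rmult_lt_0_compat]; auto.
Qed.

Lemma Xpos_err_step (e : R * R * R) : Xpos e -> Xpos (err_step e).
Proof.
  destruct e as [[e1 e2] e3]; intros [H1 [H2 H3]]; simpl.
  repeat split; [apply Rmult_lt_0_compat | apply Rdiv_lt_0_compat
                | apply sqrt_lt_R0; apply Rmult_lt_0_compat]; auto.
Qed.

Lemma Xpos_phi (x : R * R * R) (u : nat -> R) (k : nat) :
  Xpos x -> (forall k, Upos (u k)) -> Xpos (phi fex k x u).
Proof.
  intros Hx Hu; induction k as [|k IH]; simpl; [exact Hx | apply Xpos_fex; auto].
Qed.

Lemma Xpos_iter_err_step (e : R * R * R) (k : nat) :
  Xpos e -> Xpos (Nat.iter k err_step e).
Proof.
  intros He; induction k as [|k IH]; simpl; [exact He | apply Xpos_err_step; exact IH].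
Qed.

Lemma gex_mul3 (x e : R * R * R) (u : R) :
  Xpos x -> Xpos e -> Upos u ->
  gex (mul3 x e) (hex x) u = mul3 (fex x u) (err_step e).
Proof.
  destruct x as [[x1 x2] x3], e as [[e1 e2] e3].
  intros [Hx1 [Hx2 Hx3]] [He1 [He2 He3]] Hu; unfold Upos in Hu; simpl.
  f_equal; [f_equal; field; lra|].
  replace (x1 * e1 * (x2 * e2) * u) with (x1 * x2 * u * (e1 * e2)) by ring.
  apply sqrt_mult; apply Rlt_le; repeat apply Rmult_lt_0_compat; auto.
Qed.

Lemma psi_mul3_err (x e : R * R * R) (u : nat -> R) (k : nat) :
  Xpos x -> Xpos e -> (forall k, Upos (u k)) ->
  psi fex hex gex k (mul3 x e) x u = mul3 (phi fex k x u) (Nat.iter k err_step e).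
Proof.
  intros Hx He Hu; induction k as [|k IH]; simpl; [reflexivity|].
  rewrite IH; apply gex_mul3; auto using Xpos_phi, Xpos_iter_err_step.
Qed.

Lemma err_step_one : err_step (1, 1, 1) = (1, 1, 1).
Proof. simpl; rewrite Rmult_1_r, sqrt_1; f_equal; f_equal; field. Qed.

Lemma err_step3 (e : R * R * R) : Xpos e -> Nat.iter 3 err_step e = (1, 1, 1).
Proof.
  destruct e as [[a b] c]; intros [Ha [Hb Hc]]; simpl.
  set (s := sqrt (a * b)); set (t := sqrt (b * c * (c / a))).
  assert (Hs : 0 < s) by (apply sqrt_lt_R0; nra).
  assert (Hca : 0 < c / a) by (apply Rdiv_lt_0_compat; auto).
  assert (Hst : s * t = b * c).
  { assert (Hbcca : 0 < b * c * (c / a)) by (apply Rmult_lt_0_compat; nra).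
    unfold s, t; rewrite <- sqrt_mult by nra.
    apply sqrt_lem_1; [apply Rlt_le, Rmult_lt_0_compat; nra | nra | field; lra]. }
  assert (Hss : s * s = a * b) by (apply sqrt_sqrt; nra).
  replace t with (b * c / s) by (apply Rmult_eq_reg_l with s; [rewrite Hst; field|]; lra).
  replace (c / a * s * (s / (b * c))) with (c / a * (s * s) / (b * c)) by (field; lra).
  rewrite Hss.
  replace (c / a * (a * b) / (b * c)) with 1 by (field; lra).
  replace (b * c / s / (c / a * s)) with (a * b * c / (c * (s * s))) by (field; lra).
  rewrite Hss, sqrt_1; f_equal; f_equal; field; lra.
Qed.

Lemma iter_err_step_ge3 (e : R * R * R) (k : nat) :
  Xpos e -> (3 <= k)%nat -> Nat.iter k err_step e = (1, 1, 1).
Proof.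
  intros He Hk; replace k with (k - 3 + 3)%nat by lia.
  rewrite Nat.iter_add, err_step3 by exact He.
  induction (k - 3)%nat as [|n IH]; simpl; [reflexivity|].
  rewrite IH; exact err_step_one.
Qed.

Lemma mul3_one (x : R * R * R) : mul3 x (1, 1, 1) = x.
Proof. destruct x as [[x1 x2] x3]; simpl; rewrite !Rmult_1_r; reflexivity. Qed.

Lemma Xpos_mul3_factor (x xh : R * R * R) :
  Xpos x -> Xpos xh -> exists e, Xpos e /\ xh = mul3 x e.
Proof.
  destruct x as [[a b] c], xh as [[p q] r]; intros [Ha [Hb Hc]] [Hp [Hq Hr]].
  exists (p / a, q / b, r / c); simpl.
  repeat split; try (apply Rdiv_lt_0_compat; auto).
  f_equal; [f_equal|]; field; lra.
Qed.

Theorem mainTheorem9 :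
  (forall x : R * R * R, Xpos x ->
     forall z : R * R * R, cls Xpos Upos fex hex 2 x z <-> z = x)
  /\ deadbeat_observer Xpos Upos fex hex gex.
Proof.
  split.
  - intros x Hx z; split; [apply cls2_fex|].
    intros ->; exact (cls_refl Xpos Upos fex hex fex_onto 2 x Hx).
  - exists 3%nat; split; [lia|].
    intros x xh u Hx Hxh Hu k Hk.
    destruct (Xpos_mul3_factor x xh Hx Hxh) as [e [He ->]].
    rewrite psi_mul3_err, iter_err_step_ge3 by assumption.
    apply mul3_one.
Qed.
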